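(* The family $\mathcal{FG}$ of functionally generated portfolio maps, with the topology of uniform convergence (supremum metric), is not totally bounded; in fact it is not separable.
   Context: $n\ge2$; $\Delta_n=\{p\in(0,1)^n:\sum p_i=1\}$, $\overline{\Delta}_n$ its closure. A map $\pi:\Delta_n\to\overline{\Delta}_n$ is functionally generated if there is a concave $\Phi:\Delta_n\to(0,\infty)$ with $\sum_i\pi_i(p)\frac{q_i}{p_i}\ge\frac{\Phi(q)}{\Phi(p)}$ for all $p,q\in\Delta_n$. The metric is $\|\pi-\eta\|_\infty=\sup_{p\in\Delta_n}|\pi(p)-\eta(p)|$. *)

From HB Require Import structures.
From mathcomp Require Import all_boot all_order all_algebra.
From mathcomp Require Import classical_sets reals.
Set Implicit Arguments. Unset Strict Implicit. Unset Printing Implicit Defensive.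
Import Order.TTheory GRing.Theory Num.Theory.
Local Open Scope classical_set_scope.
Local Open Scope ring_scope.

Definition open_simplex (R : realType) (n : nat) (p : 'I_n -> R) : Prop :=
  (forall i, 0 < p i /\ p i < 1) /\ \sum_(i < n) p i = 1.

Definition closed_simplex (R : realType) (n : nat) (p : 'I_n -> R) : Prop :=
  (forall i, 0 <= p i) /\ \sum_(i < n) p i = 1.

Definition eucl_dist (R : realType) (n : nat) (x y : 'I_n -> R) : R :=
  Num.sqrt (\sum_(i < n) (x i - y i) ^+ 2).

(* A portfolio map pi : Delta_n -> closure(Delta_n); only its values on
   Delta_n matter. *)
Definition portfolio_map (R : realType) (n : nat)
  (pi : ('I_n -> R) -> ('I_n -> R)) : Prop :=
  forall p, open_simplex p -> closed_simplex (pi p).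

Definition pos_concave_on_simplex (R : realType) (n : nat)
  (Phi : ('I_n -> R) -> R) : Prop :=
  (forall p, open_simplex p -> 0 < Phi p) /\
  (forall p q (t : R), open_simplex p -> open_simplex q -> 0 <= t -> t <= 1 ->
     t * Phi p + (1 - t) * Phi q <= Phi (fun i => t * p i + (1 - t) * q i)).

Definition functionally_generated (R : realType) (n : nat)
  (pi : ('I_n -> R) -> ('I_n -> R)) : Prop :=
  portfolio_map pi /\
  exists Phi : ('I_n -> R) -> R, pos_concave_on_simplex Phi /\
    forall p q, open_simplex p -> open_simplex q ->
      Phi q / Phi p <= \sum_(i < n) pi p i * (q i / p i).

Definition sup_dist (R : realType) (n : nat)
  (pi eta : ('I_n -> R) -> ('I_n -> R)) : R :=
  sup [set eucl_dist (pi p) (eta p) | p in [set p | open_simplex p]].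

Definition FG_totally_bounded (R : realType) (n : nat) : Prop :=
  forall eps : R, 0 < eps ->
    exists (k : nat) (c : 'I_k -> (('I_n -> R) -> ('I_n -> R))),
      (forall j, functionally_generated (c j)) /\
      forall pi, functionally_generated pi ->
        exists j, sup_dist pi (c j) < eps.

(* Separability of FG in the sup metric: a countable (nat-indexed) subset of
   FG that is dense in FG. (FG is nonempty, so indexing by nat is general.) *)
Definition FG_separable (R : realType) (n : nat) : Prop :=
  exists f : nat -> (('I_n -> R) -> ('I_n -> R)),
    (forall k, functionally_generated (f k)) /\
    forall pi, functionally_generated pi ->
      forall eps : R, 0 < eps -> exists k, sup_dist pi (f k) < eps.

From mathcomp Require Import all_boot all_order all_algebra.
From mathcomp Require Import classical_sets boolp reals.
From mathcomp Require Import ring lra.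
Set Implicit Arguments. Unset Strict Implicit. Unset Printing Implicit Defensive.
Import Order.TTheory GRing.Theory Num.Theory.
Local Open Scope ring_scope.

(* Let Phi be the pointwise minimum on the simplex of the linear forms
   2^k q_1 + 2^-k (1 - q_1), k in nat.  The gradient of any form active at p
   is a portfolio generated by Phi.  At the points where two consecutive forms
   are both active we may choose either one, which makes pi_1 equal to 1/3 or
   2/3 there.  Choosing along a binary sequence s gives uncountably many
   functionally generated portfolios, pairwise at sup-distance at least 1/3,
   so no countable family (a fortiori no finite 1/6-net) approximates them. *)

Section MinOfLinearForms.
Variables (R : realType) (n : nat) (I : Type) (c : I -> 'I_n -> R).
Hypothesis c_gt0 : forall k i, 0 < c k i.

Definition linform (k : I) (q : 'I_n -> R) : R := \sum_i c k i * q i.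

Lemma linform_gt0 k q : open_simplex q -> 0 < linform k q.
Proof.
move=> [hq hs]; have hge i : 0 <= c k i * q i by rewrite mulr_ge0 ?ltW ?(hq i).1.
rewrite lt0r sumr_ge0 ?andbT //; apply/eqP => /(psumr_eq0P (fun i _ => hge i)) h0.
suff : \sum_(i < n) q i = 0 by rewrite hs; apply/eqP; rewrite oner_eq0.
apply: big1 => i _; have /eqP := h0 i isT.
by rewrite mulf_eq0 gt_eqF ?(hq i).1 //= => /eqP.
Qed.

Lemma linform_convex k (t : R) p q :
  linform k (fun i => t * p i + (1 - t) * q i) = t * linform k p + (1 - t) * linform k q.
Proof. by rewrite /linform !mulr_sumr -big_split; apply: eq_bigr => i _ /=; ring. Qed.

Variable K : ('I_n -> R) -> I.
Hypothesis K_min : forall q k, open_simplex q -> linform (K q) q <= linform k q.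

Definition min_linear_portfolio (p : 'I_n -> R) (i : 'I_n) : R :=
  p i * c (K p) i / linform (K p) p.

Lemma min_linear_portfolio_map : portfolio_map min_linear_portfolio.
Proof.
move=> p hp; have hl := linform_gt0 (K p) hp; split=> [i|].
  by rewrite divr_ge0 ?ltW // mulr_gt0 ?(hp.1 i).1.
rewrite -mulr_suml (eq_bigr (fun i => c (K p) i * p i)) => [|i _]; last exact: mulrC.
by rewrite divff ?gt_eqF.
Qed.

(* Phi q := linform (K q) q is concave as a minimum of linear forms. *)
Lemma min_linear_portfolio_generated : functionally_generated min_linear_portfolio.
Proof.
split; first exact: min_linear_portfolio_map.
exists (fun q => linform (K q) q); split.
  split=> [p hp|p q t hp hq t0 t1]; first exact: linform_gt0.
  rewrite linform_convex lerD // ler_wpM2l ?subr_ge0 //; exact: K_min.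
move=> p q hp hq; have hl := linform_gt0 (K p) hp.
have -> : \sum_(i < n) min_linear_portfolio p i * (q i / p i) =
          linform (K p) q / linform (K p) p.
  set L := linform (K p) p in hl *.
  rewrite /min_linear_portfolio -/L {1}/linform mulr_suml; apply: eq_bigr => i _.
  by have := (hp.1 i).1 => hpi; field; rewrite !gt_eqF.
by apply: ler_wpM2r; [rewrite invr_ge0 ltW | exact: K_min].
Qed.

End MinOfLinearForms.

Section SupDistance.
Variables (R : realType) (n : nat).
Local Open Scope classical_set_scope.

Lemma closed_simplex_le1 (x : 'I_n -> R) i : closed_simplex x -> x i <= 1.
Proof. by move=> [h0 <-]; rewrite (bigD1 i) //= lerDl sumr_ge0. Qed.

Lemma coord_le_eucl_dist (x y : 'I_n -> R) i : `|x i - y i| <= eucl_dist x y.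
Proof.
rewrite /eucl_dist -sqrtr_sqr ler_sqrt ?sumr_ge0 // => [|j _]; last exact: sqr_ge0.
by rewrite (bigD1 i) //= lerDl sumr_ge0 // => j _; rewrite sqr_ge0.
Qed.

Lemma eucl_dist_closed_simplex_le (x y : 'I_n -> R) :
  closed_simplex x -> closed_simplex y -> eucl_dist x y <= Num.sqrt n%:R.
Proof.
move=> hx hy; rewrite /eucl_dist ler_sqrt // -[n in n%:R]card_ord -sumr_const.
apply: ler_sum => i _; have := closed_simplex_le1 i hx; have := closed_simplex_le1 i hy.
by have := hx.1 i; have := hy.1 i; nra.
Qed.

Lemma coord_le_sup_dist (eta xi : ('I_n -> R) -> ('I_n -> R)) p i :
  portfolio_map eta -> portfolio_map xi -> open_simplex p ->
  `|eta p i - xi p i| <= sup_dist eta xi.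
Proof.
move=> heta hxi hp; apply: le_trans (coord_le_eucl_dist _ _ i) _.
apply: sup_upper_bound; last by exists p.
split; first by exists (eucl_dist (eta p) (xi p)), p.
exists (Num.sqrt n%:R) => _ [q hq <-].
exact: eucl_dist_closed_simplex_le (heta q hq) (hxi q hq).
Qed.

End SupDistance.

Lemma bool_seq_nat_not_injective (g : (nat -> bool) -> nat) : ~ injective g.
Proof.
move=> g_inj; pose d m := `[< exists s, g s = m /\ ~~ s m >].
have [hd|hd] := boolP (d (g d)).
  by move/asboolP: (hd) => [s [/g_inj -> /negP]].
by move/negP: (hd); apply; apply/asboolP; exists d.
Qed.

Lemma nat_seq_min_attained (R : realType) (u : nat -> R) (N : nat) :
  (forall j, (N < j)%N -> u 0%N <= u j) -> exists k, forall j, u k <= u j.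
Proof.
move=> u_tail; pose k := [arg min_(i < (ord0 : 'I_N.+1)) u i]%O.
have k_min j : (j <= N)%N -> u k <= u j.
  rewrite /k; case: arg_minP => // i _ hi hj.
  by have := hi (Ordinal (hj : (j < N.+1)%N)) isT.
exists k => j; have [jN|Nj] := leqP j N; first exact: k_min.
exact: le_trans (k_min 0%N isT) (u_tail j Nj).
Qed.

Section SwitchingPortfolios.
Variables (R : realType) (n : nat) (i0 : 'I_n).

Definition coef (k : nat) (i : 'I_n) : R := if i == i0 then 2 ^+ k else 2 ^- k.

Lemma coef_gt0 k i : 0 < coef k i.
Proof. by rewrite /coef; case: eqP; rewrite ?invr_gt0 exprn_gt0. Qed.

Definition tilt (k : nat) (a : R) : R := 2 ^+ k * a + 2 ^- k * (1 - a).

Lemma linform_coef k q : open_simplex q -> linform coef k q = tilt k (q i0).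
Proof.
move=> [_ hs]; rewrite /linform (bigD1 i0) //= /coef eqxx; congr (_ + _).
move: hs; rewrite (bigD1 i0) //= => <-; rewrite addrC addrK mulr_sumr.
by apply: eq_bigr => i /negbTE ->.
Qed.

Lemma tilt_min_attained a : 0 < a -> a < 1 -> exists k, forall j, tilt k a <= tilt j a.
Proof.
move=> a_gt0 a_lt1; apply: (nat_seq_min_attained (N := Num.Def.archi_bound a^-1)) => j hj.
have a_inv_lt : a^-1 < j%:R.
  apply: lt_le_trans (archi_boundP _) _; first by rewrite invr_ge0 ltW.
  by rewrite ler_nat ltnW.
have j_le_pow : j%:R <= 2 ^+ j :> R by rewrite -natrX ler_nat ltnW // ltn_expl.
have pow_a_ge1 : 1 <= 2 ^+ j * a.
  have := ltW (lt_le_trans a_inv_lt j_le_pow).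
  by rewrite -(ler_pM2r a_gt0) mulVf ?lt0r_neq0.
have : 0 <= 2 ^- j * (1 - a) :> R by rewrite mulr_ge0 ?invr_ge0 ?exprn_ge0 ?subr_ge0 ?ltW.
by rewrite /tilt expr0 invr1; lra.
Qed.

(* [tie m] is the point where [tilt m] and [tilt m.+1] cross:
   [1 - tie m = 2 * 4 ^ m * tie m]. *)
Definition tie (m : nat) : R := (1 + 2 * (2 ^+ m) ^+ 2)^-1.

Lemma tie_gt0 m : 0 < tie m.
Proof. by rewrite invr_gt0 addr_gt0 // mulr_gt0 // !exprn_gt0. Qed.

Lemma tie_lt1 m : tie m < 1.
Proof. by rewrite invf_lt1 ?ltrDl ?addr_gt0 // mulr_gt0 // !exprn_gt0. Qed.

Lemma one_sub_tie m : 1 - tie m = 2 * (2 ^+ m) ^+ 2 * tie m.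
Proof.
have h : 0 < 1 + 2 * (2 ^+ m) ^+ 2 :> R by rewrite addr_gt0 // mulr_gt0 // !exprn_gt0.
by rewrite /tie; field; rewrite gt_eqF.
Qed.

Lemma tie_inj : injective tie.
Proof.
move=> m m' e; have two_gt1 : 1 < 2 :> R by rewrite ltr1n.
have e2 : (2 ^+ m) ^+ 2 = (2 ^+ m') ^+ 2 :> R.
  by move: e => /invr_inj /addrI /mulfI; apply; rewrite pnatr_eq0.
apply: (inc_inj (ler_eXn2l two_gt1)); apply/eqP.
by rewrite -(@eqrXn2 _ 2) ?exprn_ge0 ?e2 // ltW.
Qed.

Lemma tilt_tie m : tilt m (tie m) = 3 * 2 ^+ m * tie m.
Proof. by rewrite /tilt one_sub_tie; field; rewrite expf_neq0 ?pnatr_eq0. Qed.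

Lemma tilt_tieS m : tilt m.+1 (tie m) = 3 * 2 ^+ m * tie m.
Proof. by rewrite /tilt one_sub_tie exprS; field; rewrite expf_neq0 ?pnatr_eq0. Qed.

(* No power of 2 lies strictly between [2 ^+ m] and [2 ^+ m.+1]. *)
Lemma tilt_tie_min m j : tilt m (tie m) <= tilt j (tie m).
Proof.
have [Pm Pj] : 0 < 2 ^+ m :> R /\ 0 < 2 ^+ j :> R by split; apply: exprn_gt0.
have t_gt0 := tie_gt0 m; have two_gt1 : 1 < 2 :> R by rewrite ltr1n.
rewrite -subr_ge0; have -> : tilt j (tie m) - tilt m (tie m) =
    tie m * (2 ^+ j - 2 ^+ m) * (2 ^+ j - 2 * 2 ^+ m) / 2 ^+ j.
  by rewrite /tilt one_sub_tie; field; rewrite ?expf_neq0 ?pnatr_eq0.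
apply: divr_ge0 (ltW Pj); rewrite -mulrA; apply: mulr_ge0 (ltW t_gt0) _.
have [jm|mj] := leqP j m.
  have : 2 ^+ j <= 2 ^+ m :> R by rewrite ler_eXn2l.
  by move=> h; nra.
have : 2 ^+ m.+1 <= 2 ^+ j :> R by rewrite ler_eXn2l.
by rewrite exprS => h; nra.
Qed.

Definition tie_breaking_minimizer (s : nat -> bool) (q : 'I_n -> R) (k : nat) : Prop :=
  (forall j, linform coef k q <= linform coef j q) /\
  (forall m, q i0 = tie m -> k = (m + s m)%N).

Lemma tie_breaking_minimizer_exists s q :
  open_simplex q -> exists k, tie_breaking_minimizer s q k.
Proof.
move=> hq; have [a_gt0 a_lt1] := hq.1 i0.
have [[m hm]|no_tie] := pselect (exists m, q i0 = tie m).
  exists (m + s m)%N; split=> [j|m' hm']; last by rewrite (tie_inj (etrans (esym hm) hm')).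
  rewrite !linform_coef // hm.
  by case: (s m); rewrite ?addn1 ?addn0 ?tilt_tieS -?tilt_tie; apply: tilt_tie_min.
have [k hk] := tilt_min_attained a_gt0 a_lt1.
exists k; split=> [j|m hm]; first by rewrite !linform_coef.
by case: no_tie; exists m.
Qed.

Definition tie_select (s : nat -> bool) (q : 'I_n -> R) : nat :=
  xget 0%N (tie_breaking_minimizer s q).

Lemma tie_selectP s q : open_simplex q -> tie_breaking_minimizer s q (tie_select s q).
Proof. by move=> hq; apply: xgetPex; apply: tie_breaking_minimizer_exists. Qed.

Definition switching_portfolio (s : nat -> bool) := min_linear_portfolio coef (tie_select s).

Lemma switching_portfolio_generated s : functionally_generated (switching_portfolio s).
Proof.
apply: min_linear_portfolio_generated => [k i|q k hq]; first exact: coef_gt0.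
exact: (tie_selectP s hq).1.
Qed.

Hypothesis n_gt1 : (1 < n)%N.

Definition probe (m : nat) (i : 'I_n) : R :=
  if i == i0 then tie m else (1 - tie m) / (n.-1)%:R.

Lemma probe_open m : open_simplex (probe m).
Proof.
have [t_gt0 t_lt1] := (tie_gt0 m, tie_lt1 m).
have n1_ge1 : 1 <= (n.-1)%:R :> R by rewrite ler1n -ltnS prednK // ltnW.
split=> [i|].
  rewrite /probe; case: eqP => // _; split; first by rewrite divr_gt0 //; lra.
  by rewrite ltr_pdivrMr; [nra | lra].
rewrite (bigD1 i0) //= /probe eqxx.
rewrite (eq_bigr (fun _ => (1 - tie m) / (n.-1)%:R)) => [|i /negbTE -> //].
rewrite sumr_const -mulr_natr.
have -> : #|(fun i : 'I_n => i != i0)| = n.-1.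
  by rewrite -[n in n.-1]card_ord -(cardC1 i0); apply: eq_card.
by field; lra.
Qed.

Lemma switching_portfolio_probe s m :
  switching_portfolio s (probe m) i0 = if s m then 2/3 else 1/3.
Proof.
have hq := probe_open m; have t_gt0 := tie_gt0 m.
rewrite /switching_portfolio /min_linear_portfolio.
have -> : tie_select s (probe m) = (m + s m)%N.
  by apply: (tie_selectP s hq).2; rewrite /probe eqxx.
rewrite linform_coef // /probe /coef eqxx.
case: (s m); rewrite ?addn1 ?addn0 ?tilt_tieS ?tilt_tie ?exprS;
  by field; rewrite lt0r_neq0 ?expf_neq0 ?pnatr_eq0.
Qed.

Lemma switching_portfolio_separated s s' xi : portfolio_map xi ->
  sup_dist (switching_portfolio s) xi < 1/6 ->
  sup_dist (switching_portfolio s') xi < 1/6 -> s = s'.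
Proof.
move=> hxi hs hs'; apply: funext => m; have hq := probe_open m.
have near_s := le_lt_trans (coord_le_sup_dist i0
  (switching_portfolio_generated s).1 hxi hq) hs.
have near_s' := le_lt_trans (coord_le_sup_dist i0
  (switching_portfolio_generated s').1 hxi hq) hs'.
move: near_s near_s'; rewrite !switching_portfolio_probe !ltr_norml.
by case: (s m) (s' m) => [] [] // /andP[? ?] /andP[? ?]; lra.
Qed.

Lemma switching_portfolios_not_countably_approximable (I : Type) (idx : I -> nat)
    (c : I -> ('I_n -> R) -> ('I_n -> R)) :
  injective idx -> (forall i, portfolio_map (c i)) ->
  ~ (forall s, exists i, sup_dist (switching_portfolio s) (c i) < 1/6).
Proof.
move=> idx_inj hc /choice [pick hpick].
apply: (@bool_seq_nat_not_injective (fun s => idx (pick s))) => s s' /idx_inj e.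
by apply: (switching_portfolio_separated (hc (pick s)) (hpick s)); rewrite e.
Qed.

End SwitchingPortfolios.

Theorem lemma4p2 (R : realType) (n : nat) (hn : (2 <= n)%N) :
  ~ FG_totally_bounded R n /\ ~ FG_separable R n.
Proof.
pose i0 : 'I_n := Ordinal (ltnW hn).
have sixth_gt0 : 0 < 1/6 :> R by rewrite divr_gt0.
have FG_switching := @switching_portfolio_generated R n i0.
split.
  move=> /(_ _ sixth_gt0) [k [c [hc hcov]]].
  apply: (switching_portfolios_not_countably_approximable (i0 := i0) hn
    (idx := val) val_inj (fun j => (hc j).1)).
  by move=> s; apply: hcov.
move=> [f [hf hdense]].
apply: (switching_portfolios_not_countably_approximable (i0 := i0) hn
  (idx := id) (fun _ _ => id) (fun k => (hf k).1)).
by move=> s; apply: hdense sixth_gt0.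
Qed.
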